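(* Let $X \sim \mathcal{N}(\mu,\sigma^2)$ be a single observation, with $\mu\in\mathbb{R}$ and $\sigma>0$ unknown, and for $c>1$ let $I_2(c) = (-c|X|,\; c|X|)$. Then the coverage probability $P_{\mu,\sigma}(\mu \in I_2(c))$ depends on $(\mu,\sigma)$ only through $\lambda=\mu/\sigma$ and is an even function of $\lambda$. Writing $\lambda=|\mu|/\sigma\ge 0$, it equals $$P_2(\lambda,c) = \Phi\Big(\frac{c-1}{c}\lambda\Big) + 1 - \Phi\Big(\frac{c+1}{c}\lambda\Big).$$ Over $\lambda\ge0$, $P_2(\lambda,c)$ is minimized at $$\lambda^*(c) = \Big[\frac{c}{2}\log\frac{c+1}{c-1}\Big]^{1/2}.$$ Consequently, for every $\alpha$ with $0<\alpha<1/2$ there exists a constant $c=c(\alpha)>1$ such that $\inf_{\mu\in\mathbb{R},\sigma>0} P_{\mu,\sigma}(\mu\in I_2(c(\alpha))) \ge 1-\alpha$.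
   Context: $\Phi$ denotes the standard normal cumulative distribution function. $I_2(c)$ is the (Stein) interval symmetric about $0$ with half-length $c|X|$. *)

From HB Require Import structures.
From mathcomp Require Import all_boot all_order all_algebra.
From mathcomp Require Import all_classical all_reals all_analysis.
From mathcomp Require Import normal_distribution.
Set Implicit Arguments. Unset Strict Implicit. Unset Printing Implicit Defensive.
Import Order.TTheory GRing.Theory Num.Theory.
Local Open Scope classical_set_scope.
Local Open Scope ring_scope.

Definition Phi {R : realType} (x : R) : R :=
  fine (normal_prob 0 1 `]-oo, x]).

Definition I2 {R : realType} (c x : R) : set R := `](- (c * `|x|)), c * `|x|[.

Definition coverage {R : realType} (c mu sigma : R) : R :=
  fine (normal_prob mu sigma [set x : R | mu \in I2 c x]).

Definition P2 {R : realType} (lam c : R) : R :=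
  Phi ((c - 1) / c * lam) + 1 - Phi ((c + 1) / c * lam).

Definition lamstar {R : realType} (c : R) : R :=
  Num.sqrt (c / 2 * ln ((c + 1) / (c - 1))).

From HB Require Import structures.
From mathcomp Require Import all_boot all_order all_algebra.
From mathcomp Require Import all_classical all_reals all_analysis.
From mathcomp Require Import normal_distribution measurable_realfun.
From mathcomp Require Import ring lra.
Import Order.TTheory GRing.Theory Num.Theory.
Import numFieldTopology.Exports.
Local Open Scope classical_set_scope.
Local Open Scope ring_scope.

(* Standardising X, the event [mu \in I2 c X] is [|X| > |mu| / c]; by the
   symmetry of Phi its probability is P2 lam c with lam = |mu| / sigma, an even
   function of mu / sigma.  With a = (c - 1) / c and b = (c + 1) / c, P2 lam c
   is 1 plus the difference at lam of the cdfs of N(0, a^-2) and N(0, b^-2).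
   The ratio of their densities at u is expR (2 / c * (u^2 - lamstar c ^ 2)),
   so the difference decreases up to lamstar c and increases after it.
   Finally 1 - P2 lam c is the standard normal mass of (a lam, b lam], at most
   (b - a) lam * phi (a lam) = 2 / (c - 1) * (a lam) phi (a lam) <= 2 / (c - 1),
   so c = 1 + 2 / alpha has coverage at least 1 - alpha. *)

Section normal_cdf.
Context {R : realType}.
Implicit Types m s x y : R.

Definition normal_cdf m s x : R := fine (normal_prob m s `]-oo, x]).

Lemma normal_prob_fin_num m s (A : set R) : measurable A ->
  normal_prob m s A \is a fin_num.
Proof.
move=> mA; rewrite ge0_fin_numE ?measure_ge0//.
exact: le_lt_trans (probability_le1 (normal_prob m s) mA) (ltry _).
Qed.

Lemma normal_prob_itvNy_open m s x :
  normal_prob m s `]-oo, x[ = normal_prob m s `]-oo, x].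
Proof.
have -> : [set` `]-oo, x]] = `]-oo, x[ `|` [set x] :> set R.
  apply/seteqP; split => y /=; rewrite !in_itv/= ?andbT.
    by rewrite le_eqVlt => /orP[/eqP->|->]; [right|left].
  by case=> [/ltW|->].
by rewrite measureU0//; exact: integral_set1.
Qed.

Lemma normal_prob_itvy_open m s x :
  normal_prob m s `]x, +oo[ = (1 - normal_prob m s `]-oo, x])%E.
Proof.
rewrite -probability_setC//; congr (normal_prob m s _).
by apply/seteqP; split => y /=; rewrite !in_itv/= ?andbT ?ltNge => /negP.
Qed.

Lemma normal_prob_itvy_closed m s x :
  normal_prob m s `[x, +oo[ = (1 - normal_prob m s `]-oo, x])%E.
Proof.
rewrite -normal_prob_itvNy_open -probability_setC//; congr (normal_prob m s _).
by apply/seteqP; split => y /=; rewrite !in_itv/= ?andbT ?leNgt => /negP.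
Qed.

Lemma normal_cdf_split m s x y : x <= y ->
  normal_cdf m s y = normal_cdf m s x + fine (normal_prob m s `]x, y]).
Proof.
move=> xy; rewrite /normal_cdf -fineD ?normal_prob_fin_num// -measureU//.
  congr (fine (normal_prob m s _)).
  apply/seteqP; split => z /=; rewrite !in_itv/= ?andbT.
    by case: (leP z x) => zx; [left|right].
  by case=> [/le_trans->//|/andP[]].
apply/seteqP; split => z //=; rewrite !in_itv/= ?andbT => -[zx /andP[]].
by rewrite ltNge zx.
Qed.

Lemma normal_cdf_std m s x : 0 < s -> normal_cdf m s x = Phi ((x - m) / s).
Proof.
move=> s0; pose F u := (u + m / s) * s.
have Fx : F ((x - m) / s) = x by rewrite /F; field; exact: lt0r_neq0.
have F'E : F^`()%classic = cst s.
  apply/funext => u; rewrite /F derive1E deriveM// deriveD// derive_cst.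
  by rewrite derive_id derive_cst addr0 scaler0 add0r scaler1.
rewrite /normal_cdf /Phi /normal_prob -[in LHS]Fx.
rewrite increasing_ge0_integration_by_substitutionNy //.
- congr fine; apply: eq_integral => u _; congr EFin.
  rewrite F'E /= !normal_pdfE ?oner_eq0 ?lt0r_neq0//.
  rewrite /= /F /normal_peak /normal_fun !fctE /=.
  have -> : - ((u + m / s) * s - m) ^+ 2 / (s ^+ 2 *+ 2) =
            - (u - 0) ^+ 2 / (1 ^+ 2 *+ 2) by field; exact: lt0r_neq0.
  have -> : s ^+ 2 * pi *+ 2 = s ^+ 2 * (1 ^+ 2 * pi *+ 2) by ring.
  have k0 : 0 < Num.sqrt (1 ^+ 2 * pi *+ 2 : R).
    by rewrite sqrtr_gt0 expr1n mul1r pmulrn_lgt0// pi_gt0.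
  rewrite sqrtrM ?sqr_ge0// sqrtr_sqr ger0_norm ?ltW//.
  by field; rewrite lt0r_neq0// lt0r_neq0.
- by move=> u v _ _ uv; rewrite /F ltr_pM2r// ltrD2r.
- by rewrite F'E => ? _; exact: cst_continuous.
- by rewrite F'E; exact: is_cvg_cst.
- by rewrite F'E; exact: cvg_cst.
- split.
    by move=> u _; rewrite /F; apply: derivableM => //; exact: derivableD.
  apply: cvg_at_left_filter; rewrite /F.
  apply: cvgM; last exact: cvg_cst.
  by apply: (@cvgD _ R^o); [exact: cvg_id|exact: cvg_cst].
- by apply/gt0_cvgMlNy => //; exact: cvg_addrr_Ny.
- exact/continuous_subspaceT/continuous_normal_pdf/lt0r_neq0.
- by move=> ? _; exact: normal_pdf_ge0.
Qed.

Lemma PhiN x : Phi (- x) = 1 - Phi x.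
Proof.
rewrite /Phi.
have -> : normal_prob 0 1 `]-oo, - x] = normal_prob 0 1 `[x, +oo[.
  rewrite /normal_prob ge0_integration_by_substitutionNy.
  - apply: eq_integral => u _; congr EFin.
    by rewrite /= !normal_pdfE ?oner_eq0// /normal_fun !subr0 sqrrN.
  - exact/continuous_subspaceT/continuous_normal_pdf/oner_neq0.
  - by move=> ? _; exact: normal_pdf_ge0.
by rewrite normal_prob_itvy_closed fineB ?normal_prob_fin_num.
Qed.

Lemma Phi_mul k x : 0 < k -> Phi (k * x) = normal_cdf 0 k^-1 x.
Proof. by move=> k0; rewrite normal_cdf_std ?invr_gt0// subr0 invrK mulrC. Qed.

Lemma normal_pdf01E x : normal_pdf 0 1 x = normal_peak 1 * expR (- x ^+ 2 / 2).
Proof. by rewrite normal_pdfE ?oner_eq0// /normal_fun subr0 expr1n. Qed.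

Lemma normal_pdf0_inv k x : 0 < k ->
  normal_pdf 0 k^-1 x = k * normal_pdf 0 1 (k * x).
Proof.
move=> k0; have kn : k != 0 by rewrite lt0r_neq0.
rewrite normal_pdf01E normal_pdfE ?invr_eq0// /normal_peak /normal_fun.
have -> : k^-1 ^+ 2 * pi *+ 2 = k^-1 ^+ 2 * (1 ^+ 2 * pi *+ 2) by ring.
have p0 : 0 < Num.sqrt (1 ^+ 2 * pi *+ 2 : R).
  by rewrite sqrtr_gt0 expr1n mul1r pmulrn_lgt0// pi_gt0.
rewrite sqrtrM ?sqr_ge0// sqrtr_sqr ger0_norm ?invr_ge0 ?ltW//.
have -> : - (x - 0) ^+ 2 / (k^-1 ^+ 2 *+ 2) = - (k * x) ^+ 2 / 2 by field.
by field; rewrite kn lt0r_neq0.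
Qed.

Lemma normal_peak1_le1 : normal_peak (1 : R) <= 1.
Proof.
have h : 1 <= (1 ^+ 2 * pi *+ 2 : R).
  by rewrite expr1n mul1r -mulr_natr; have := pi_ge2 R; lra.
have s1 : 1 <= Num.sqrt (1 ^+ 2 * pi *+ 2 : R).
  by rewrite -[leLHS]sqrtr1 ler_sqrt// (le_trans ler01 h).
by rewrite /normal_peak invf_le1// (lt_le_trans ltr01 s1).
Qed.

Lemma mulr_normal_pdf01_le1 x : 0 <= x -> x * normal_pdf 0 1 x <= 1.
Proof.
move=> x0; rewrite normal_pdf01E mulrCA.
apply: mulr_ile1;
  rewrite ?normal_peak_ge0 ?mulr_ge0 ?expR_ge0 ?normal_peak1_le1//.
rewrite mulNr expRN ler_pdivrMr ?expR_gt0// mul1r.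
apply: le_trans (expR_ge1Dx _).
have := sqr_ge0 (x - 1); nra.
Qed.

Lemma normal_prob_itv_le s1 s2 x y :
  (forall u, x < u <= y -> normal_pdf 0 s1 u <= normal_pdf 0 s2 u) ->
  (normal_prob 0 s1 `]x, y] <= normal_prob 0 s2 `]x, y])%E.
Proof.
move=> le12; apply: ge0_le_integral => //.
- by move=> u _; rewrite lee_fin normal_pdf_ge0.
- by apply/measurable_EFinP; apply: measurable_funTS;
    exact: measurable_normal_pdf.
- by apply/measurable_EFinP; apply: measurable_funTS;
    exact: measurable_normal_pdf.
Qed.

(* The standard normal density decreases on [0, +oo). *)
Lemma normal_prob01_itv_le x y : 0 <= x -> x <= y ->
  fine (normal_prob 0 1 `]x, y]) <= (y - x) * normal_pdf 0 1 x.
Proof.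
move=> x0 xy; rewrite -lee_fin fineK ?normal_prob_fin_num//.
apply: (@le_trans _ _
  (\int[lebesgue_measure]_(u in `]x, y]) (normal_pdf 0 1 x)%:E)%E).
  apply: ge0_le_integral => //.
  - by move=> u _; rewrite lee_fin normal_pdf_ge0.
  - by apply/measurable_EFinP; apply: measurable_funTS;
      exact: measurable_normal_pdf.
  - move=> u; rewrite /= in_itv/= => /andP[xu _].
    rewrite lee_fin !normal_pdf01E.
    rewrite ler_pM2l ?normal_peak_gt0 ?oner_eq0// ler_expR ler_pM2r// lerN2.
    by rewrite ler_pXn2r ?nnegrE// ?ltW// (le_lt_trans x0 xu).
have hm : (lebesgue_measure `]x, y] <= (y - x)%:E :> \bar R)%E.
  by rewrite lebesgue_measure_itv/=; case: ifPn; rewrite // lee_fin subr_ge0.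
by rewrite integral_cst// mulrC EFinM lee_wpmul2l ?lee_fin ?normal_pdf_ge0.
Qed.

End normal_cdf.

Section coverage.
Context {R : realType}.
Implicit Types c mu sigma : R.

Lemma coverage_setE c mu : 0 < c ->
  [set x : R | mu \in I2 c x] = `]-oo, - (`|mu| / c)[ `|` `]`|mu| / c, +oo[.
Proof.
move=> c0.
have inI2 x : mu \in I2 c x <-> `|mu| / c < `|x|.
  by rewrite /I2 in_setE /= in_itv /= -ltr_norml ltr_pdivrMr// mulrC.
apply/seteqP; split => x /=.
  move/inI2; rewrite ltr_normr in_itv/= ?andbT => /orP[xt|xt].
    by right; rewrite in_itv/= xt.
  by left; rewrite ltrNr.
move=> xI; apply/inI2; rewrite ltr_normr; apply/orP.
case: xI => xt; [right; by rewrite ltrNr|left].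
by move: xt; rewrite in_itv/= ?andbT.
Qed.

Lemma coverage_Phi c mu sigma : 0 < c -> 0 < sigma ->
  coverage c mu sigma =
    Phi ((- (`|mu| / c) - mu) / sigma) + 1 - Phi ((`|mu| / c - mu) / sigma).
Proof.
move=> c0 s0; have t0 : 0 <= `|mu| / c by rewrite divr_ge0// ltW.
rewrite /coverage coverage_setE// measureU//; last first.
  by rewrite -subset0 => x [] /=; rewrite !in_itv/= ?andbT => h1 h2; lra.
set t := `|mu| / c in t0 *.
(* [measureU] displays the sum through the canonical measure structure;
   restate it with [normal_prob] so that the lemmas above apply. *)
rewrite -[X in fine X]/(normal_prob mu sigma `]-oo, (- t)%R[ +
                       normal_prob mu sigma `]t, +oo[)%E.
rewrite normal_prob_itvNy_open normal_prob_itvy_open.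
rewrite fineD ?normal_prob_fin_num//;
  last by rewrite fin_numB normal_prob_fin_num.
rewrite [fine (1 - _)%E]fineB ?normal_prob_fin_num//.
by rewrite -!(normal_cdf_std _ _ _ s0) addrA.
Qed.

Lemma coverage_P2 c mu sigma : 0 < c -> 0 < sigma ->
  coverage c mu sigma = P2 (`|mu| / sigma) c.
Proof.
move=> c0 s0; have cn : c != 0 by rewrite lt0r_neq0.
have sn : sigma != 0 by rewrite lt0r_neq0.
rewrite coverage_Phi// /P2; case: (leP 0 mu) => mu0.
  rewrite ger0_norm//.
  have -> : (- (mu / c) - mu) / sigma = - ((c + 1) / c * (mu / sigma)).
    by field; rewrite ?cn ?sn.
  have -> : (mu / c - mu) / sigma = - ((c - 1) / c * (mu / sigma)).
    by field; rewrite ?cn ?sn.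
  by rewrite !PhiN; ring.
rewrite ltr0_norm//.
have -> : (- (- mu / c) - mu) / sigma = (c - 1) / c * (- mu / sigma).
  by field; rewrite ?cn ?sn.
have -> : (- mu / c - mu) / sigma = (c + 1) / c * (- mu / sigma).
  by field; rewrite ?cn ?sn.
by [].
Qed.

End coverage.

Section P2_minimum.
Context {R : realType} (c : R).
Hypothesis c_gt1 : 1 < c.
Local Notation a := ((c - 1) / c).
Local Notation b := ((c + 1) / c).

Let c_gt0 : 0 < c. Proof. exact: lt_trans c_gt1. Qed.
Let a_gt0 : 0 < a. Proof. by rewrite divr_gt0// subr_gt0. Qed.
Let b_gt0 : 0 < b. Proof. by rewrite divr_gt0// ltr_wpDr. Qed.
Let c_neq0 : c != 0. Proof. exact: lt0r_neq0. Qed.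
Let c1_neq0 : c - 1 != 0. Proof. by rewrite lt0r_neq0// subr_gt0. Qed.

Lemma P2_cdfE l : P2 l c = normal_cdf 0 a^-1 l + 1 - normal_cdf 0 b^-1 l.
Proof. by rewrite /P2 !Phi_mul. Qed.

Lemma lamstar_sqr : lamstar c ^+ 2 = c / 2 * ln ((c + 1) / (c - 1)).
Proof.
have q1 : 1 <= (c + 1) / (c - 1) by rewrite ler_pdivlMr ?subr_gt0// mul1r; lra.
by rewrite sqr_sqrtr// mulr_ge0 ?divr_ge0 ?ln_ge0// ltW.
Qed.

Lemma normal_pdf_lamstar u : normal_pdf 0 a^-1 u =
  expR (2 / c * (u ^+ 2 - lamstar c ^+ 2)) * normal_pdf 0 b^-1 u.
Proof.
have c1p : c + 1 != 0 by rewrite lt0r_neq0// ltr_wpDr.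
have q0 : 0 < (c + 1) / (c - 1) by rewrite divr_gt0 ?subr_gt0// ltr_wpDr// ltW.
rewrite !normal_pdf0_inv// !normal_pdf01E lamstar_sqr.
have -> : 2 / c * (u ^+ 2 - c / 2 * ln ((c + 1) / (c - 1))) =
          2 * u ^+ 2 / c - ln ((c + 1) / (c - 1)) by field.
have -> : - (a * u) ^+ 2 / 2 = - (b * u) ^+ 2 / 2 + 2 * u ^+ 2 / c.
  by field; rewrite c_neq0.
by rewrite expRD expRB lnK ?posrE//; field; rewrite c_neq0 c1_neq0 c1p.
Qed.

Lemma P2_lamstar_le l : 0 <= l -> P2 (lamstar c) c <= P2 l c.
Proof.
move=> l0; have L0 : 0 <= lamstar c := sqrtr_ge0 _.
rewrite !P2_cdfE; case: (leP (lamstar c) l) => [Ll|/ltW lL].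
- rewrite (normal_cdf_split _ _ _ _ Ll) (normal_cdf_split 0 b^-1 _ _ Ll).
  suff : fine (normal_prob 0 b^-1 `]lamstar c, l]) <=
         fine (normal_prob 0 a^-1 `]lamstar c, l]) by lra.
  apply: fine_le; rewrite ?normal_prob_fin_num//.
  apply: normal_prob_itv_le => u /andP[/ltW Lu _].
  rewrite normal_pdf_lamstar ler_peMl ?normal_pdf_ge0// -[leLHS]expR0 ler_expR.
  by rewrite pmulr_rge0 ?divr_gt0// subr_ge0 ler_pXn2r ?nnegrE ?(le_trans L0).
- rewrite (normal_cdf_split _ _ _ _ lL) (normal_cdf_split 0 b^-1 _ _ lL).
  suff : fine (normal_prob 0 a^-1 `]l, lamstar c]) <=
         fine (normal_prob 0 b^-1 `]l, lamstar c]) by lra.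
  apply: fine_le; rewrite ?normal_prob_fin_num//.
  apply: normal_prob_itv_le => u /andP[/ltW lu uL].
  rewrite normal_pdf_lamstar ler_piMl ?normal_pdf_ge0// expR_le1.
  by rewrite pmulr_rle0 ?divr_gt0// subr_le0 ler_pXn2r ?nnegrE ?(le_trans l0).
Qed.

Lemma P2_ge l : 0 <= l -> 1 - 2 / (c - 1) <= P2 l c.
Proof.
move=> l0; have al0 : 0 <= a * l := mulr_ge0 (ltW a_gt0) l0.
have ab : a * l <= b * l by rewrite ler_wpM2r// ler_pM2r ?invr_gt0//; lra.
have Phi_split :
    Phi (b * l) = Phi (a * l) + fine (normal_prob 0 1 `]a * l, b * l])
  := normal_cdf_split 0 1 _ _ ab.
have ba : b * l - a * l = 2 / (c - 1) * (a * l).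
  by field; rewrite c_neq0 c1_neq0.
rewrite /P2 Phi_split.
suff : fine (normal_prob 0 1 `]a * l, b * l]) <= 2 / (c - 1) by lra.
apply: le_trans (normal_prob01_itv_le _ _ al0 ab) _.
rewrite ba -(mulrA (2 / (c - 1))).
apply: ler_piMr; last exact: mulr_normal_pdf01_le1.
by rewrite divr_ge0// subr_ge0 ltW.
Qed.

End P2_minimum.

Theorem corollary2 (R : realType) :
  (forall c : R, 1 < c ->
     (exists f : R -> R,
        (forall mu sigma : R, 0 < sigma -> coverage c mu sigma = f (mu / sigma))
        /\ (forall l : R, f (- l) = f l))
     /\ (forall mu sigma : R, 0 < sigma ->
           coverage c mu sigma = P2 (`|mu| / sigma) c)
     /\ (forall l : R, 0 <= l -> P2 (lamstar c) c <= P2 l c))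
  /\
  (forall alpha : R, 0 < alpha < 1 / 2 ->
     exists c : R, 1 < c /\
       1 - alpha <= inf [set y : R | exists mu sigma : R,
                                        0 < sigma /\ y = coverage c mu sigma]).
Proof.
split=> [c c1|alpha /andP[alpha0 _]].
  have c0 : 0 < c := lt_trans ltr01 c1.
  split; [exists (fun l => P2 `|l| c); split|split].
  - by move=> mu sigma s0; rewrite coverage_P2// normf_div (gtr0_norm s0).
  - by move=> l; rewrite normrN.
  - by move=> mu sigma s0; rewrite coverage_P2.
  - exact: P2_lamstar_le.
pose c := 1 + 2 / alpha.
have c1 : 1 < c by rewrite ltrDl divr_gt0.
exists c; split => //; apply: lb_le_inf; first by exists (coverage c 0 1), 0, 1.
move=> _ [mu [sigma [s0 ->]]].
rewrite coverage_P2 ?(lt_trans ltr01 c1)//.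
have -> : alpha = 2 / (c - 1).
  by rewrite /c addrAC subrr add0r; field; exact: lt0r_neq0.
exact: P2_ge (divr_ge0 (normr_ge0 _) (ltW s0)).
Qed.
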